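(* Let $n\ge 3$, $q=\frac{2n}{n-2}$, $\kappa=\frac{n-1}{n}$. Identify $S^1$ with $[-\pi,\pi]$ with endpoints identified, and let $\lambda=-1$ on $(-\pi,0)$, $\lambda=1$ on $(0,\pi)$. Let $N$ be a smooth positive function on $S^1$, $\gamma_N=-\frac{\int_{S^1}\lambda N}{\int_{S^1}N}$, and $t,\eta,\mu\in\mathbb{R}$. For $d>0$ let $\psi_d$ be the unique positive solution in $W^{2,\infty}(S^1)$ of $$-2\kappa q\,d^{-2q/n}\psi_d''-2\eta^2d^{-2q}\psi_d^{-q-1}-\kappa(\mu d^{-q}+\gamma_N+\lambda)^2\psi_d^{-q-1}+\kappa(t+\lambda)^2\psi_d^{q-1}=0,$$ and let $\mathcal{F}(d)=\psi_d(0)$. Suppose $|t|\neq1$ and define $$M_{d,\pm}=\left[\frac{2\eta^2d^{-2q}+\kappa(\mu d^{-q}+\gamma_N\pm1)^2}{\kappa(t\pm1)^2}\right]^{\frac{1}{2q}},\quad m_d=\min(M_{d,+},M_{d,-}),\quad M_d=\max(M_{d,+},M_{d,-}).$$ Then $m_d\le\psi_d\le M_d$ on $S^1$ for all $d>0$, and in particular $m_d\le\mathcal{F}(d)\le M_d$. *)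

From HB Require Import structures.
From mathcomp Require Import all_boot all_order all_algebra.
From mathcomp Require Import all_classical all_reals all_analysis.
Set Implicit Arguments. Unset Strict Implicit. Unset Printing Implicit Defensive.
Import Order.TTheory GRing.Theory Num.Theory.
Import numFieldNormedType.Exports.
Local Open Scope classical_set_scope.
Local Open Scope ring_scope.

(* Functions on S^1 = R / 2piZ are represented as 2pi-periodic functions on R. *)
Definition periodic2pi {R : realType} (f : R -> R) : Prop :=
  forall x, f (x + 2 * pi) = f x.

(* lambda = -1 on (-pi,0), 1 on (0,pi) (mod 2pi); value 0 on the null set pi Z *)
Definition lam {R : realType} (x : R) : R := Num.sg (sin x).

Definition smooth {R : realType} (f : R -> R) : Prop :=
  forall (k : nat) (x : R), derivable (iter k (fun g => derive1 g) f) x 1.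

Definition gammaN {R : realType} (N : R -> R) : R :=
  - (Rintegral (@lebesgue_measure R) `[- pi, pi] (fun x => lam x * N x))
    / (Rintegral (@lebesgue_measure R) `[- pi, pi] N).

Definition qexp {R : realType} (n : nat) : R := 2 * n%:R / (n%:R - 2).
Definition kap {R : realType} (n : nat) : R := (n%:R - 1) / n%:R.

(* psi belongs to W^{2,oo}(S^1): periodic, C^1 with Lipschitz derivative *)
Definition W2inf {R : realType} (psi : R -> R) : Prop :=
  periodic2pi psi /\ (forall x, derivable psi x 1) /\
  exists C : R, forall x y, `|derive1 psi x - derive1 psi y| <= C * `|x - y|.

(* psi solves the ODE almost everywhere (psi'' is the a.e. derivative of psi') *)
Definition solves_ode {R : realType} (n : nat) (N : R -> R) (t eta mu d : R)
  (psi : R -> R) : Prop :=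
  let q := qexp n in let k := kap n in
  {ae @lebesgue_measure R, forall x,
     derivable (derive1 psi) x 1 /\
     - 2 * k * q * d `^ (- (2 * q / n%:R)) * derive1 (derive1 psi) x
     - 2 * eta ^+ 2 * d `^ (- (2 * q)) * psi x `^ (- q - 1)
     - k * (mu * d `^ (- q) + gammaN N + lam x) ^+ 2 * psi x `^ (- q - 1)
     + k * (t + lam x) ^+ 2 * psi x `^ (q - 1) = 0}.

Definition Mpm {R : realType} (n : nat) (N : R -> R) (t eta mu d s : R) : R :=
  let q := qexp n in let k := kap n in
  ((2 * eta ^+ 2 * d `^ (- (2 * q)) + k * (mu * d `^ (- q) + gammaN N + s) ^+ 2)
    / (k * (t + s) ^+ 2)) `^ (1 / (2 * q)).

(* Where lambda = +-1 and the equation holds, i.e. almost everywhere, it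
   reads  c psi'' = psi^(-q-1) (kappa (t +- 1)^2 psi^(2q) - (2 eta^2 d^(-2q) +
   kappa (mu d^(-q) + gamma_N +- 1)^2))  with c < 0, so psi'' > 0 wherever
   psi > M_d and psi'' < 0 wherever psi < m_d.  A periodic function f with
   Lipschitz derivative g obeys the maximum principle for such an a.e. sign
   condition: at a maximum point x0 above the level, g x0 = 0; a Lipschitz
   function with a.e. positive derivative is nondecreasing (Lipschitz maps send
   null sets to null sets), so g >= 0 just to the right of x0, hence f is
   constant there, hence g = 0 on an interval, contradicting g' > 0 a.e. *)

From mathcomp Require Import all_boot all_order all_algebra.
From mathcomp Require Import all_classical all_reals all_analysis.
From mathcomp Require Import measurable_realfun.
From mathcomp Require Import ring lra.
Import Order.TTheory GRing.Theory Num.Theory.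
Import numFieldNormedType.Exports.

Set Implicit Arguments.
Unset Strict Implicit.
Unset Printing Implicit Defensive.

Local Open Scope classical_set_scope.
Local Open Scope ring_scope.

Section max_principle.
Context {R : realType}.
Local Notation mu := (@lebesgue_measure R).

Lemma sin_intpi (k : int) : sin (k%:~R * pi) = 0 :> R.
Proof.
have sin_natpi (m : nat) : sin (m%:R * pi) = 0 :> R.
  by rewrite mulr_natl -[_ *+ m]add0r (alternatingn (@sinDpi R)) sin0 mulr0.
case: k => m; first exact: sin_natpi.
rewrite NegzE mulrNz mulNr sinN; apply/eqP; rewrite oppr_eq0; apply/eqP.
exact: sin_natpi.
Qed.

Lemma sin_eq0_intpi (x : R) : sin x = 0 -> exists k : int, x = k%:~R * pi.
Proof.
move=> sx0; have pi0 : 0 < pi :> R := pi_gt0 R.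
set k := Num.floor (x / pi); exists k.
set r := x - k%:~R * pi.
have r0 : 0 <= r by rewrite subr_ge0 -ler_pdivlMr // floor_le.
have rpi : r < pi.
  have := floorD1_gt (x / pi).
  by rewrite -/k ltr_pdivrMr // rmorphD rmorph1 mulrDl mul1r /r; lra.
have sr0 : sin r = 0 by rewrite sinB sx0 sin_intpi !mul0r mulr0 subr0.
have -> : x = r + k%:~R * pi by rewrite subrK.
suff -> : r = 0 by rewrite add0r.
apply/eqP; rewrite eq_le r0 andbT leNgt; apply/negP => rpos.
by have := sin_gt0_pi (introT andP (conj rpos rpi)); rewrite sr0 ltxx.
Qed.

Lemma sin_eq0_negligible : mu.-negligible [set x : R | sin x = 0].
Proof.
have cZ : countable (range (fun k : int => k%:~R * pi : R)).
  exact: card_le_trans (card_image_le _ _) (countableP _).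
exists (range (fun k : int => k%:~R * pi)); split.
- exact: countable_measurable cZ.
- exact: countable_lebesgue_measure0.
- by move=> x /sin_eq0_intpi[k ->]; exists k.
Qed.

Lemma exists_notin_negligible (S : set R) a b : a < b -> mu.-negligible S ->
  exists x, a < x < b /\ ~ S x.
Proof.
move=> ab [A [mA A0 SA]]; apply/not_existsP => H.
have sub : `]a, b[%classic `<=` A.
  move=> x /= xab; apply: SA; have := H x; rewrite in_itv /= in xab.
  by move=> /not_andP[]; [rewrite xab|move/contrapT].
have : (mu `]a, b[%classic <= mu A)%E by apply: le_measure; rewrite ?inE.
have -> : mu A = 0%E := A0.
rewrite lebesgue_measure_itv /= lte_fin ab -EFinB lee_fin subr_le0 leNgt ab.
by [].
Qed.

Lemma last_crossing (g : R -> R) a b y : continuous g -> a <= b ->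
  g b < y <= g a ->
  exists2 s, a <= s < b & g s = y /\ forall x, s < x <= b -> g x < y.
Proof.
move=> gc ab /andP[gby yga].
pose S := [set x | (a <= x <= b) /\ y <= g x].
have Sa : S a by split; rewrite ?lexx.
have hS : has_sup S by split; [exists a | exists b; move=> x [/andP[]]].
set s := sup S.
have a_s : a <= s := sup_upper_bound hS Sa.
have sb : s <= b by apply: ge_sup; [exists a | move=> x [/andP[]]].
have right x : s < x <= b -> g x < y.
  move=> /andP[sx xb]; rewrite ltNge; apply/negP => yx.
  suff : x <= s by rewrite leNgt sx.
  apply: sup_upper_bound => //; split => //.
  by rewrite xb andbT (le_trans a_s) // ltW.
have ygs : y <= g s.
  rewrite leNgt; apply/negP => gsy.
  have := cvgr_lt _ (gc s) _ gsy => /(_ _) /nbhs_ballP[e /= e0 He].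
  have [x Sx sx] := sup_adherent e0 hS; rewrite -/s in sx.
  have xs : x <= s := sup_upper_bound hS Sx.
  have : g x < y by apply: He; rewrite /ball /= ger0_norm ?subr_ge0 //; lra.
  by case: Sx => _; rewrite leNgt => /negP.
have sltb : s < b.
  by rewrite lt_neqAle sb andbT; apply: contraTneq ygs => ->; rewrite -ltNge.
exists s; first by rewrite a_s sltb.
split => //; apply/eqP; rewrite eq_le ygs andbT leNgt; apply/negP => ygs'.
have := cvgr_gt _ (gc s) _ ygs' => /(_ _) /nbhs_ballP[e /= e0 He].
pose h := Num.min e (b - s) / 2.
have m1 : Num.min e (b - s) <= e by rewrite ge_min lexx.
have m2 : Num.min e (b - s) <= b - s by rewrite ge_min lexx orbT.
have m0 : 0 < Num.min e (b - s) by rewrite lt_min e0 subr_gt0 sltb.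
have : y < g (s + h).
  by apply: He; rewrite /ball /= opprD addrA subrr sub0r normrN gtr0_norm /h; lra.
by rewrite ltNge ltW // right // /h; apply/andP; split; lra.
Qed.

Lemma derive1_gt0_right (g : R -> R) s b : derivable g s 1 -> 0 < derive1 g s ->
  s < b -> exists x, s < x < b /\ g s < g x.
Proof.
move=> dg pos sb; rewrite derive1E in pos.
have dq : (fun h => h^-1 *: ((g \o shift s) (h *: 1) - g s)) @ 0^' --> derive g s 1.
  exact: dg.
have := cvgr_gt _ dq _ pos => /(_ _).
rewrite near_withinE => /nbhs_ballP[e /= e0 He].
pose h := Num.min e (b - s) / 2.
have m1 : Num.min e (b - s) <= e by rewrite ge_min lexx.
have m2 : Num.min e (b - s) <= b - s by rewrite ge_min lexx orbT.
have m0 : 0 < Num.min e (b - s) by rewrite lt_min e0 subr_gt0 sb.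
have h0 : 0 < h by rewrite /h; lra.
exists (s + h); split; first by apply/andP; split; rewrite /h; lra.
have := He h; rewrite /ball /= sub0r normrN gtr0_norm // => /(_ _ (lt0r_neq0 h0)).
rewrite [h%:A]mulr1 pmulr_rgt0 ?invr_gt0 // subr_gt0 addrC.
by apply; rewrite /h; lra.
Qed.

Section Lipschitz.
Variables (g : R -> R) (K : R).
Hypotheses (K0 : 0 < K) (gLip : forall x y, `|g x - g y| <= K * `|x - y|).

Lemma lipschitz_continuous : continuous g.
Proof.
move=> x; apply/cvgrPdist_lt => e e0.
apply/nbhs_ballP; exists (e / K); first exact: divr_gt0.
move=> y; rewrite /ball /= => xy.
by apply: le_lt_trans (gLip x y) _; rewrite mulrC -ltr_pdivlMr.
Qed.

Lemma lipschitz_image_negligible (N : set R) :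
  mu.-negligible N -> mu.-negligible (g @` N).
Proof.
move=> /negligible_outer_measure N0; apply/negligible_outer_measure.
apply/eqP; rewrite eq_le outer_measure_ge0 andbT.
apply/lee_addgt0Pr => e e0; rewrite add0e.
have e2K : 0 < e / (2 * K) by rewrite divr_gt0 // mulr_gt0.
have : ((wlength idfun)^*%mu N < (e / (2 * K))%:E)%E by rewrite N0 lte_fin.
rewrite outer_measure_open_itv_cover => /ereal_inf_lt[_ [F [Fitv NF] <-]] FK.
pose ab k := sval (cid (Fitv k)).
have Fab k : F k = `](ab k).1, (ab k).2[%classic by rewrite /ab; case: cid.
pose r k := K * ((ab k).2 - (ab k).1).
pose G k := `](g (ab k).1 - r k), (g (ab k).1 + r k)[%classic.
have sub : g @` N `<=` \bigcup_k G k.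
  move=> _ [x Nx <-]; have [k _ Fkx] := NF x Nx; exists k => //.
  move: Fkx; rewrite Fab /G /= !in_itv /= => /andP[ax xb].
  have := gLip x (ab k).1; rewrite [`|x - _|]gtr0_norm ?subr_gt0 // => h.
  have h2 : K * (x - (ab k).1) < r k by rewrite ltr_pM2l // ltrD2r.
  by have := le_lt_trans h h2; rewrite distrC ltr_distlC.
apply: (le_trans (le_outer_measure ((wlength idfun)^*%mu) _ _ sub)).
apply: (le_trans (outer_measure_sigma_subadditive _ G)).
apply: (@le_trans _ _ (\sum_(0 <= i <oo) ((2 * K)%:E * wlength idfun (F i)))%E).
  apply: lee_nneseries => [i _ _|i _]; first exact: outer_measure_ge0.
  change (mu (G i) <= (2 * K)%:E * wlength idfun (F i))%E.
  rewrite /G /r lebesgue_measure_itv /= Fab wlength_itv /=.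
  set a := (ab i).1; set b := (ab i).2.
  have [hab|hab] := ltP a b.
    have Kab : 0 < K * (b - a) by rewrite mulr_gt0 // subr_gt0.
    rewrite !ifT ?lte_fin //; last by lra.
    by rewrite -EFinD -EFinB -EFinM lee_fin; lra.
  rewrite [X in (_ <= _ * X)%E]ifF; last by rewrite lte_fin ltNge hab.
  rewrite mule0 ifF //; apply/negbTE; rewrite -leNgt lee_fin.
  have : K * (b - a) <= 0 by rewrite pmulr_rle0 // subr_le0.
  lra.
rewrite nneseriesZl; last by move=> i _; exact: wlength_ge0.
have -> : e = 2 * K * (e / (2 * K)) by rewrite mulrC divfK // mulf_neq0 // gt_eqF.
apply: le_trans (lee_wpmul2l _ (ltW FK)) _; first by rewrite lee_fin ltW // mulr_gt0.
by rewrite -EFinM.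
Qed.

Lemma lipschitz_ae_derive_gt0_le (N : set R) a b : mu.-negligible N -> a <= b ->
  (forall x, a < x < b -> ~ N x -> derivable g x 1 /\ 0 < derive1 g x) ->
  g a <= g b.
Proof.
move=> N0 ab gpos; rewrite leNgt; apply/negP => gba.
(* y is taken outside g @` N, so that the last crossing of level y avoids N. *)
have [y [/andP[gby yga] gNy]] :=
  exists_notin_negligible gba (lipschitz_image_negligible N0).
have [s /andP[a_s sb] [gs gy]] :=
  last_crossing lipschitz_continuous ab (introT andP (conj gby (ltW yga))).
have sa : a < s.
  by rewrite lt_neqAle a_s andbT; apply: contraTneq yga => ->; rewrite gs ltxx.
have Ns : ~ N s by move=> Ns; apply: gNy; exists s.
have [dg g's] := gpos s (introT andP (conj sa sb)) Ns.
have [x [/andP[sx xb] gsx]] := derive1_gt0_right dg g's sb.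
by have := gy x; rewrite sx ltW //= => /(_ isT); rewrite -gs ltNge ltW.
Qed.

End Lipschitz.

Lemma periodicz (f : R -> R) T : periodic f T ->
  forall (k : int) x, f (x + k%:~R * T) = f x.
Proof.
move=> fT [] m x; first by rewrite mulr_natl (periodicn fT).
rewrite NegzE mulrNz mulNr -[in RHS](subrK (m.+1%:R * T) x).
by rewrite mulr_natl (periodicn fT).
Qed.

Lemma periodic_continuous_max (f : R -> R) T : 0 < T -> periodic f T ->
  continuous f -> exists x0, forall x, f x <= f x0.
Proof.
move=> T0 fT fc.
have [c _ cmax] := EVT_max (ltW T0) (continuous_subspaceT fc).
exists c => x; set k := Num.floor (x / T).
have r0 : 0 <= x - k%:~R * T by rewrite subr_ge0 -ler_pdivlMr // floor_le.
have rT : x - k%:~R * T <= T.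
  have := floorD1_gt (x / T).
  by rewrite -/k ltr_pdivrMr // rmorphD rmorph1 mulrDl mul1r; lra.
by rewrite -(subrK (k%:~R * T) x) (periodicz fT) cmax // in_itv /= r0.
Qed.

Lemma derive_eq0_at_max (f g : R -> R) (x0 : R) :
  (forall x : R, is_derive x 1 f (g x)) ->
  (forall x, f x <= f x0) -> g x0 = 0.
Proof.
move=> fd fmax; have [_ <-] := fd x0.
have x0I : x0 \in `]x0 - 1, x0 + 1[ by rewrite in_itv /=; apply/andP; split; lra.
have fder t : derivable f t 1 by have [] := fd t.
have ab : x0 - 1 <= x0 + 1 by lra.
by have [] := derive1_at_max ab (fun t _ => fder t) x0I (fun t _ => fmax t).
Qed.

Lemma derive_ge0_right_of_max (f g : R -> R) (x0 b : R) :
  (forall x : R, is_derive x 1 f (g x)) -> (forall x, f x <= f x0) ->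
  (forall t, x0 < t < b -> 0 <= g t) -> forall t, x0 < t < b -> g t = 0.
Proof.
move=> fd fmax gge0 t /andP[x0t tb].
have fder x : derivable f x 1 by have [] := fd x.
have fc : continuous f.
  by move=> x; apply: differentiable_continuous; apply/derivable1_diffP.
apply: (derive_eq0_at_max fd) => x; apply: le_trans (fmax x) _.
have f'ge0 y : y \in `]x0, t[ -> 0 <= derive1 f y.
  rewrite in_itv /= derive1E => /andP[x0y yt]; have [_ ->] := fd y.
  by apply: gge0; rewrite x0y (lt_trans yt).
apply: (ger0_derive1_le_cc (fun y _ => fder y) f'ge0 (continuous_subspaceT fc)).
- by rewrite in_itv /= lexx ltW.
- by rewrite in_itv /= lexx ltW.
- exact: ltW.
Qed.

Lemma periodic_max_principle (f g : R -> R) (T K L : R) :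
  0 < T -> periodic f T -> (forall x : R, is_derive x 1 f (g x)) ->
  0 < K -> (forall x y, `|g x - g y| <= K * `|x - y|) ->
  {ae mu, forall x, L < f x -> derivable g x 1 /\ 0 < derive1 g x} ->
  forall x, f x <= L.
Proof.
move=> T0 fT fd K0 gLip [N [mN N0 gN]] x1.
have Nneg : mu.-negligible N by exists N; split.
have g'pos x : ~ N x -> L < f x -> derivable g x 1 /\ 0 < derive1 g x.
  by move=> Nx; apply: contrapT => /gN.
have fc : continuous f.
  by move=> x; apply: differentiable_continuous; apply/derivable1_diffP; case: (fd x).
rewrite leNgt; apply/negP => Lfx1.
have [x0 fmax] := periodic_continuous_max T0 fT fc.
have [d d0 Lf] : exists2 d, 0 < d & forall t, x0 < t < x0 + d -> L < f t.
  have := cvgr_gt _ (fc x0) _ (lt_le_trans Lfx1 (fmax x1)) => /(_ _).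
  move=> /nbhs_ballP[e /= e0 He]; exists e => // t /andP[x0t td]; apply: He.
  by rewrite /ball /= ltr0_norm ?subr_lt0 //; lra.
have gge0 t : x0 < t < x0 + d -> 0 <= g t.
  move=> /andP[x0t td]; rewrite -(derive_eq0_at_max fd fmax).
  apply: (lipschitz_ae_derive_gt0_le K0 gLip Nneg (ltW x0t)).
  move=> x /andP[x0x xt] Nx; apply: g'pos Nx (Lf x _).
  by rewrite x0x (lt_trans xt).
have g0 := derive_ge0_right_of_max fd fmax gge0.
have [t [/andP[x0t td] Nt]] := exists_notin_negligible (ltr_pwDr d0 (lexx x0)) Nneg.
have [dg g't] := g'pos t Nt (Lf t (introT andP (conj x0t td))).
have [x [/andP[tx xd] gtx]] := derive1_gt0_right dg g't td.
by move: gtx; rewrite !g0 ?ltxx ?x0t ?td ?xd ?(lt_trans x0t tx).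
Qed.

Lemma ode_threshold_sign (c2 A B T p p2 e : R) :
  c2 < 0 -> 0 <= A + B -> 0 < T -> 0 < p -> 0 < e ->
  c2 * p2 - A * p `^ (- e - 1) - B * p `^ (- e - 1) + T * p `^ (e - 1) = 0 ->
  (((A + B) / T) `^ (1 / (2 * e)) < p -> 0 < p2) /\
  (p < ((A + B) / T) `^ (1 / (2 * e)) -> p2 < 0).
Proof.
move=> c20 AB0 T0 p0 e0 E.
set P1 := p `^ (- e - 1).
have P10 : 0 < P1 by rewrite /P1 powR_gt0.
have P2E : p `^ (e - 1) = p `^ (2 * e) * P1.
  rewrite /P1 -powRD; last by rewrite (lt0r_neq0 p0) implybT.
  congr (_ `^ _); ring.
set X := (A + B) / T.
have X0 : 0 <= X by rewrite /X divr_ge0 // ltW.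
have AB : A + B = X * T by rewrite /X divfK // lt0r_neq0.
set Y := p `^ (2 * e).
have MX : (X `^ (1 / (2 * e))) `^ (2 * e) = X.
  rewrite -powRrM (_ : 1 / (2 * e) * (2 * e) = 1) ?powRr1 //.
  by rewrite mul1r mulVf // mulf_neq0 // lt0r_neq0.
have key : c2 * p2 = P1 * T * (X - Y).
  have -> : P1 * T * (X - Y) = P1 * (X * T) - T * (Y * P1) by ring.
  rewrite -AB; move: E; rewrite P2E => E.
  rewrite -[c2 * p2]subr0 -E /P1 /Y; ring.
have e2 : 0 < 2 * e by rewrite mulr_gt0.
split => h.
  have : X < Y.
    by rewrite -MX /Y; apply: gt0_ltr_powR => //; rewrite nnegrE ?powR_ge0 // ltW.
  move=> XY; have : P1 * T * (X - Y) < 0 by rewrite pmulr_rlt0 ?mulr_gt0 // subr_lt0.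
  rewrite -key; nra.
have : Y < X.
  by rewrite -MX /Y; apply: gt0_ltr_powR => //; rewrite nnegrE ?powR_ge0 // ltW.
move=> XY; have : 0 < P1 * T * (X - Y) by rewrite mulr_gt0 ?mulr_gt0 // subr_gt0.
rewrite -key; nra.
Qed.

Lemma Mpm_ode_sign (n : nat) (N : R -> R) (t eta mu d s p p2 : R) :
  (3 <= n)%N -> 0 < d -> `|t| != 1 -> (s = 1 \/ s = -1) -> 0 < p ->
  let q := qexp n in let k := kap n in
  - 2 * k * q * d `^ (- (2 * q / n%:R)) * p2
  - 2 * eta ^+ 2 * d `^ (- (2 * q)) * p `^ (- q - 1)
  - k * (mu * d `^ (- q) + gammaN N + s) ^+ 2 * p `^ (- q - 1)
  + k * (t + s) ^+ 2 * p `^ (q - 1) = 0 ->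
  (Mpm n N t eta mu d s < p -> 0 < p2) /\ (p < Mpm n N t eta mu d s -> p2 < 0).
Proof.
move=> n3 d0 t1 s1 p0 q k E.
have n3R : (3 : R) <= n%:R by rewrite (ler_nat R 3 n).
have q0 : 0 < q by rewrite /q /qexp divr_gt0 //; lra.
have k0 : 0 < k by rewrite /k /kap divr_gt0 //; lra.
apply: ode_threshold_sign E => //.
- have : 0 < k * q * d `^ (- (2 * q / n%:R)).
    by apply: mulr_gt0; [exact: mulr_gt0 | exact: powR_gt0].
  lra.
- apply: addr_ge0; apply: mulr_ge0.
  + by apply: mulr_ge0; rewrite ?sqr_ge0.
  + exact: powR_ge0.
  + exact: ltW.
  + exact: sqr_ge0.
- apply: mulr_gt0 => //; rewrite lt_def sqr_ge0 andbT sqrf_eq0.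
  apply: contra t1 => /eqP ts; rewrite (_ : t = - s); last by lra.
  by case: s1 => ->; rewrite ?opprK ?normrN normr1.
Qed.

Lemma lam_pm1 (x : R) : sin x != 0 -> lam x = 1 \/ lam x = -1.
Proof.
rewrite /lam neq_lt => /orP[sx|sx]; [right; exact: ltr0_sg | left; exact: gtr0_sg].
Qed.

Lemma sin_neq0_ae : {ae mu, forall x : R, sin x != 0}.
Proof.
by apply: negligibleS sin_eq0_negligible => x /= /negP; rewrite negbK => /eqP.
Qed.

End max_principle.

Theorem lemma3p12 (R : realType) (n : nat) (hn : (3 <= n)%N)
  (N : R -> R) (hNper : periodic2pi N) (hNsm : smooth N) (hNpos : forall x, 0 < N x)
  (t eta mu : R) (ht : `|t| != 1) :
  forall (d : R), 0 < d ->
  forall (psi : R -> R), W2inf psi -> (forall x, 0 < psi x) ->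
    solves_ode n N t eta mu d psi ->
    let m_d := Num.min (Mpm n N t eta mu d 1) (Mpm n N t eta mu d (-1)) in
    let M_d := Num.max (Mpm n N t eta mu d 1) (Mpm n N t eta mu d (-1)) in
    (forall x, m_d <= psi x <= M_d) /\ (m_d <= psi 0 <= M_d).
Proof.
move=> d d0 psi [psi_per [psi_der [C psi'Lip]]] psi_pos psi_ode m_d M_d.
have K0 : 0 < `|C| + 1 by rewrite ltr_pwDr.
have psi'K x y : `|derive1 psi x - derive1 psi y| <= (`|C| + 1) * `|x - y|.
  by apply: le_trans (psi'Lip x y) _; rewrite ler_wpM2r // ler_wpDr // ler_norm.
have psi'N x y : `|(- derive1 psi) x - (- derive1 psi) y| <= (`|C| + 1) * `|x - y|.
  by rewrite !fctE -opprD normrN.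
have psi_is_der (x : R) : is_derive x 1 psi (derive1 psi x).
  by rewrite derive1E; exact: derivableP.
have pi2 : 0 < 2 * pi :> R by rewrite mulr_gt0 ?pi_gt0.
have psi''_sign : {ae lebesgue_measure, forall x, derivable (derive1 psi) x 1 /\
    (M_d < psi x -> 0 < derive1 (derive1 psi) x) /\
    (psi x < m_d -> derive1 (derive1 psi) x < 0)}.
  rewrite /solves_ode /= in psi_ode.
  apply: (filterS2 (ae_filter_ringOfSetsType _) _ (@sin_neq0_ae R) psi_ode).
  move=> x sx [dx E].
  have lx := lam_pm1 sx.
  have [gtM ltM] := Mpm_ode_sign hn d0 ht lx (psi_pos x) E.
  split; [done | split => [Mpsi|psim]].
    by apply: gtM; apply: le_lt_trans Mpsi; case: lx => ->; rewrite le_max lexx ?orbT.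
  by apply: ltM; apply: lt_le_trans psim _; case: lx => ->; rewrite ge_min lexx ?orbT.
have le_M x : psi x <= M_d.
  apply: (periodic_max_principle pi2 psi_per psi_is_der K0 psi'K) => //.
  apply: (@filterS _ _ (ae_filter_ringOfSetsType _) _ _ _ psi''_sign).
  by move=> y [dy [gtM _]] /gtM.
have ge_m x : m_d <= psi x.
  rewrite -lerN2; apply: (periodic_max_principle (f := - psi) pi2 _ _ K0 psi'N).
  - by move=> y; rewrite !fctE psi_per.
  apply: (@filterS _ _ (ae_filter_ringOfSetsType _) _ _ _ psi''_sign).
  move=> y [dy [_ ltm]] /=; rewrite ltrN2 => psim; split; first exact: derivableN.
  by rewrite derive1E deriveN // oppr_gt0 -derive1E ltm.
by split => [x|]; rewrite ge_m le_M.
Qed.
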